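(* For every integer $\ell\ge 3$, every graph $G$ with no induced cycle of length at least $\ell$ satisfies $\mathrm{cop}(G)\le \ell-2$.
   Context: All graphs are finite, undirected, without loops or multiple edges. Cops and Robber game on a connected graph: for an integer $k\ge 1$, the cop player places $k$ cops on (not necessarily distinct) vertices, then the robber is placed on a vertex; then, starting with the cops, the players alternate moves. In a cop move, each cop either stays or moves to an adjacent vertex; in a robber move, the robber stays or moves to an adjacent vertex. The cops win if at some point a cop and the robber occupy the same vertex. Both players have complete information. The cop number $\mathrm{cop}(G)$ of a connected graph $G$ is the smallest $k$ such that the cops have a winning strategy with $k$ cops; for a non-connected graph it is the maximum cop number of its connected components. *)

(* A finite simple graph is a symmetric irreflexive relation
   e : rel T on a finType T. *)
From mathcomp Require Import all_boot.
Set Implicit Arguments. Unset Strict Implicit. Unset Printing Implicit Defensive.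

Section CopsRobber.
Variables (T : finType) (e : rel T).

Definition induced_cycle (s : seq T) : Prop :=
  [/\ 3 <= size s, uniq s &
      forall (x0 : T) i j, i < size s -> j < size s ->
        e (nth x0 s i) (nth x0 s j) =
        (j == (i.+1) %% size s) || (i == (j.+1) %% size s)].

Definition cop_move (k : nat) (c c' : {ffun 'I_k -> T}) : Prop :=
  forall i, c' i = c i \/ e (c i) (c' i).

Definition robber_move (r r' : T) : Prop := r' = r \/ e r r'.

Definition caught (k : nat) (c : {ffun 'I_k -> T}) (r : T) : Prop :=
  exists i, c i = r.

(* cop_win c r : it is the cops' turn, cops at c, robber at r (not caught);
   the cops can force a capture (least fixed point = finite-time win). *)
Inductive cop_win (k : nat) : {ffun 'I_k -> T} -> T -> Prop :=
| CopWin c r c' :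
    cop_move c c' ->
    (caught c' r \/
     (forall r', robber_move r r' -> caught c' r' \/ cop_win c' r')) ->
    cop_win c r.

(* k cops win on the connected component S: the cops choose initial positions
   in S, then the robber chooses a vertex of S, then the cops move first. *)
Definition cops_win_on (k : nat) (S : {set T}) : Prop :=
  exists c : {ffun 'I_k -> T}, (forall i, c i \in S) /\
    forall r, r \in S -> caught c r \/ cop_win c r.

Definition component (v : T) : {set T} := [set u | connect e v u].

Definition is_cop_number_on (S : {set T}) (n : nat) : Prop :=
  [/\ 1 <= n, cops_win_on n S & forall k, 1 <= k < n -> ~ cops_win_on k S].

(* cop(G) <= m : the cop number of every connected component is at most m
   (the cop number of G is the maximum over its components). *)
Definition cop_number_le (m : nat) : Prop :=
  forall v : T, exists2 n, n <= m & is_cop_number_on (component v) n.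

End CopsRobber.

From mathcomp Require Import all_boot zify.
From Stdlib Require Import Classical.
Set Implicit Arguments. Unset Strict Implicit. Unset Printing Implicit Defensive.

(* The cops occupy an induced path [P] (cop [i] on its [i]-th vertex, the
   surplus cops on its last one) while the robber is confined to a component
   [R] of [G - N[P]].  If some vertex [u] next to [R] sees, among the vertices
   of [P], only the last one, the cops extend [P] by [u]; when [P] already has
   [l - 2] vertices they also give up its first vertex.  This is harmless: a
   vertex next to [R] seen by the first vertex of [P] only would close, with
   [P] and a shortest path through [R], an induced cycle of length at least
   [l].  Otherwise every vertex of [N(P)] next to [R] is seen by an earlier
   vertex of [P], so the cops may retract the last vertex without enlarging
   [R].  Every round decreases [|R| * (l - 1) + |P|]. *)

Lemma ex_minimal_measure (A : Type) (P : A -> Prop) (f : A -> nat) :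
  (exists a, P a) -> exists a, P a /\ forall b, P b -> f a <= f b.
Proof.
move=> [a Pa]; apply: NNPP => nomin.
suff : forall n b, f b < n -> ~ P b by move/(_ _ a (ltnSn _)).
elim=> // n IH b hb Pb; apply: nomin; exists b; split=> // c Pc.
by rewrite leqNgt; apply/negP => hc; apply: (IH c) Pc; lia.
Qed.

Lemma behead_rcons (T : Type) (s : seq T) x :
  0 < size s -> behead (rcons s x) = rcons (behead s) x.
Proof. by case: s. Qed.

Ltac solve_index :=
  repeat match goal with |- context [if ?a == ?b then _ else _] => case: (a =P b) => ? end;
  do ![case: eqP => ?] => //; lia.

Lemma modn_succ n i : i < n -> i.+1 %% n = if i.+1 == n then 0 else i.+1.
Proof. by move=> h; case: eqP => [->|h2]; [rewrite modnn | rewrite modn_small; lia]. Qed.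

Section InducedPaths.
Variables (T : finType) (e : rel T) (x0 : T).
Hypotheses (esym : symmetric e) (eirr : irreflexive e).

Definition induced_path (s : seq T) : Prop :=
  uniq s /\ forall i j, i < size s -> j < size s ->
    e (nth x0 s i) (nth x0 s j) = (j == i.+1) || (i == j.+1).

Lemma induced_cycle_cat A B : induced_path A -> induced_path B ->
  0 < size A -> 1 < size B -> (forall y, y \in A -> y \notin B) ->
  (forall i j, i < size A -> j < size B -> e (nth x0 A i) (nth x0 B j) =
      ((i == (size A).-1) && (j == 0)) || ((i == 0) && (j == (size B).-1))) ->
  induced_cycle e (A ++ B).
Proof.
move=> [uA hA] [uB hB] sA sB dis cr; split.
- by rewrite size_cat; lia.
- rewrite cat_uniq uA uB /= andbT; apply/hasPn => y yB; apply/negP => yA.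
  by move: (dis _ yA); rewrite yB.
move=> y0 i j hi hj.
rewrite (set_nth_default x0 y0 hi) (set_nth_default x0 y0 hj) !nth_cat.
rewrite (modn_succ hi) (modn_succ hj); rewrite size_cat in hi hj *.
case: ltnP => hiA; case: ltnP => hjA.
- by rewrite hA //; solve_index.
- rewrite cr //; last by lia.
  solve_index.
- rewrite esym cr //; last by lia.
  solve_index.
- rewrite hB //; try lia.
  solve_index.
Qed.

Lemma induced_path_rcons P u : induced_path P -> u \notin P ->
  (forall j, j < size P -> e (nth x0 P j) u = (j == (size P).-1)) ->
  induced_path (rcons P u).
Proof.
move=> [uP hP] uNP hu; split; first by rewrite rcons_uniq uNP.
move=> i j; rewrite size_rcons !nth_rcons => hi hj.
case: ltnP => h1; case: ltnP => h2.
- by rewrite hP.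
- by rewrite ifT; [rewrite hu //; solve_index | lia].
- by rewrite ifT; [rewrite esym hu //; solve_index | lia].
- rewrite !ifT; try lia.
  have -> : i = j by lia.
  by rewrite eirr; solve_index.
Qed.

Lemma induced_path_behead P : induced_path P -> induced_path (behead P).
Proof.
move=> [uP hP]; split; first by rewrite -drop1 drop_uniq.
move=> i j; rewrite size_behead !nth_behead => hi hj.
by rewrite hP; try lia; solve_index.
Qed.

Lemma induced_path_take n P : induced_path P -> induced_path (take n P).
Proof.
move=> [uP hP]; split; first by rewrite take_uniq.
move=> i j; rewrite size_take => hi hj.
rewrite !nth_take; try (case: ifP hi hj; lia).
by rewrite hP //; case: ifP hi hj; lia.
Qed.

Definition walk (Y : pred T) u x (q : seq T) : Prop :=
  [/\ 1 < size q, nth x0 q 0 = u, nth x0 q (size q).-1 = x,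
      forall i, i.+1 < size q -> e (nth x0 q i) (nth x0 q i.+1) &
      forall i, 0 < i -> i.+1 < size q -> Y (nth x0 q i)].

Lemma walk_shortcut Y u x q a b : walk Y u x q -> 0 < a <= b -> b < size q ->
  e (nth x0 q a.-1) (nth x0 q b) -> walk Y u x (take a q ++ drop b q).
Proof.
move=> [s1 h0 hl he hY] hab hb hc.
have sta : size (take a q) = a by rewrite size_take ifT //; lia.
have sz : size (take a q ++ drop b q) = a + (size q - b).
  by rewrite size_cat sta size_drop.
split; rewrite ?sz.
- lia.
- by rewrite nth_cat sta ifT ?nth_take //; lia.
- rewrite nth_cat sta ifF; last lia.
  by rewrite nth_drop -hl; congr nth; lia.
- move=> i hi; rewrite !nth_cat sta.
  case: (ltnP i.+1 a) => h2.
  + by rewrite !ifT ?nth_take //; try lia; apply: he; lia.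
  case: (ltnP i a) => h3.
  + have ei : i = a.-1 by lia.
    by rewrite nth_take // nth_drop (_ : b + (i.+1 - a) = b) ?ei //; lia.
  + rewrite !nth_drop (_ : b + (i.+1 - a) = (b + (i - a)).+1); last lia.
    by apply: he; lia.
- move=> i hi0 hi; rewrite nth_cat sta.
  by case: ltnP => h2; [rewrite nth_take //| rewrite nth_drop]; apply: hY; lia.
Qed.

Lemma shortest_walk_induced Y u x q : walk Y u x q -> u != x ->
  (forall q', walk Y u x q' -> size q <= size q') -> induced_path q.
Proof.
move=> w ux mn; have [s1 h0 hl he hY] := w.
have noshortcut a b : 0 < a -> a < b -> b < size q -> ~~ e (nth x0 q a.-1) (nth x0 q b).
  move=> ha hab hb; apply/negP => hc.
  have := mn _ (walk_shortcut w (a:=a) (b:=b) _ hb hc).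
  by rewrite size_cat size_take size_drop; case: ifP; lia.
have nochord i j : i.+1 < j -> j < size q -> ~~ e (nth x0 q i) (nth x0 q j).
  exact: (noshortcut i.+1 j).
have neq i j : i < j -> j < size q -> nth x0 q i != nth x0 q j.
  move=> hij hj; apply/negP => /eqP eij.
  case: (posnP i) => hi.
  - subst i; case: (ltnP j.+1 (size q)) => hj2.
    + have := noshortcut 1 j.+1 isT; rewrite ltnS /= eij => /(_ hij hj2).
      by rewrite he.
    + have ej : j = (size q).-1 by lia.
      by move: ux; rewrite -h0 -hl eij ej eqxx.
  - have := noshortcut i j hi hij hj; rewrite -eij.
    by rewrite (_ : i = i.-1.+1) ?he //; lia.
split.
- apply/(uniqP x0) => i j; rewrite !inE => hi hj eij.
  case: (ltngtP i j) => // h.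
  + by move: (neq i j h hj); rewrite eij eqxx.
  + by move: (neq j i h hi); rewrite eij eqxx.
move=> i j hi hj.
case: (ltngtP i j) => h.
- case: (eqVneq j i.+1) => [ej|hne]; first by subst j; rewrite he ?eqxx.
  rewrite (negbTE (nochord _ _ _ hj)); last lia.
  solve_index.
- case: (eqVneq i j.+1) => [ei|hne]; first by subst i; rewrite esym he ?eqxx ?orbT.
  rewrite esym (negbTE (nochord _ _ _ hi)); last lia.
  solve_index.
- by subst j; rewrite eirr; solve_index.
Qed.

Lemma walk_of_connect (f : rel T) Y u x a b :
  (forall y z, f y z -> e y z && Y z) ->
  e u a -> e b x -> Y a -> connect f a b -> exists q, walk Y u x q.
Proof.
move=> hf ua bx Ya /connectP[p hp hb].
have fY : all Y (a :: p).
  rewrite /= Ya; have : path f a p := hp.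
  by elim: p {hp hb} (a) => //= z p IH c /andP[/hf/andP[_ ->] /IH].
exists (u :: rcons (a :: p) x); split.
- by rewrite /= size_rcons.
- by [].
- by rewrite /= size_rcons /= nth_rcons /= ltnn eqxx.
- move=> i hi; have : path e u (rcons (a :: p) x).
    rewrite rcons_path /= ua -hb bx andbT.
    by apply: sub_path hp => y z /hf /andP[].
  by move/(pathP x0)/(_ i); apply; move: hi; rewrite /= size_rcons.
- move=> i hi0 hi; rewrite /= size_rcons in hi.
  have -> : nth x0 (u :: rcons (a :: p) x) i = nth x0 (rcons (a :: p) x) i.-1.
    by case: i hi0 {hi}.
  rewrite nth_rcons ifT; last by rewrite /=; lia.
  by apply: (allP fY); apply: mem_nth; rewrite /=; lia.
Qed.

(* Closing [P] with a shortest walk from its last neighbour [u] back to its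
   first neighbour [x] through vertices far from [P] gives an induced cycle. *)
Lemma induced_cycle_close (P : seq T) u x (Y : pred T) :
  induced_path P -> 0 < size P ->
  (forall y, Y y -> forall i, i < size P -> (nth x0 P i != y) && ~~ e (nth x0 P i) y) ->
  x \notin P -> u \notin P -> u != x ->
  (forall i, i < size P -> e (nth x0 P i) x = (i == 0)) ->
  (forall i, i < size P -> e (nth x0 P i) u = (i == (size P).-1)) ->
  (exists q, walk Y u x q) ->
  exists s, induced_cycle e s /\ (size P).+2 <= size s.
Proof.
move=> iP sP hY xP uP ux hx hu /(ex_minimal_measure (@size T))[q [w mn]].
have iq := shortest_walk_induced w ux mn.
have [s1 h0 hl he hYq] := w.
exists (P ++ q); split; last by rewrite size_cat; lia.
apply: induced_cycle_cat => //.
- move=> y yP; apply/negP => /(nthP x0)[j hj ej].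
  have {}hj : j < size q := hj.
  case: (posnP j) => hj0; first by subst j; move: uP; rewrite -h0 ej yP.
  case: (ltnP j.+1 (size q)) => hj1.
  + move: yP => /(nthP x0)[i hi ei].
    by move: (hY _ (hYq j hj0 hj1) i hi); rewrite ej ei eqxx.
  + have ejj : j = (size q).-1 by lia.
    by move: xP; rewrite -hl -ejj ej yP.
- move=> i j hi hj.
  case: (posnP j) => hj0; first by subst j; rewrite h0 hu //; solve_index.
  case: (ltnP j.+1 (size q)) => hj1.
  + by have /andP[_ /negbTE ->] := hY _ (hYq j hj0 hj1) i hi; solve_index.
  + have ejj : j = (size q).-1 by lia.
    by rewrite ejj hl hx //; solve_index.
Qed.

End InducedPaths.

Section CopStrategy.
Variables (T : finType) (e : rel T) (x0 : T).
Hypotheses (esym : symmetric e) (eirr : irreflexive e).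

Definition guarded (P : seq T) (y : T) : bool := has (fun p => (p == y) || e p y) P.

Definition free_edge P : rel T := fun y z => [&& e y z, ~~ guarded P y & ~~ guarded P z].

Definition region P r : {set T} := [set y | connect (free_edge P) r y].

Lemma guardedP P y :
  reflect (exists2 i, i < size P & (nth x0 P i == y) || e (nth x0 P i) y) (guarded P y).
Proof. exact: has_nthP. Qed.

Lemma guarded_nth P y i : i < size P -> (nth x0 P i == y) || e (nth x0 P i) y -> guarded P y.
Proof. by move=> hi h; apply/guardedP; exists i. Qed.

Lemma free_edge_sym P : symmetric (free_edge P).
Proof.
by move=> y z; rewrite /free_edge esym; case: (guarded P y); case: (guarded P z); rewrite ?andbF.
Qed.

Lemma connect_invariant (f : rel T) (A : pred T) a b :
  (forall y z, A y -> f y z -> A z) -> connect f a b -> A a -> A b.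
Proof.
move=> h /connectP[p hp ->]; elim: p a hp => //= z p IH a /andP[fz pz] Aa.
exact: IH pz (h _ _ Aa fz).
Qed.

Lemma region_unguarded P r y : ~~ guarded P r -> y \in region P r -> ~~ guarded P y.
Proof.
move=> hr; rewrite inE => hy; apply: (connect_invariant (A := fun y => ~~ guarded P y)) hy hr.
by move=> a b _ /and3P[].
Qed.

Lemma region_closed P r y z : ~~ guarded P r -> y \in region P r -> e y z ->
  ~~ guarded P z -> z \in region P r.
Proof.
move=> hr hy hyz hz; have hy' := region_unguarded hr hy.
move: hy; rewrite !inE => hy; apply: connect_trans hy (connect1 _).
by rewrite /free_edge hyz hy' hz.
Qed.

Lemma region_neighbour P r y x : ~~ guarded P r -> y \in region P r -> e y x ->
  guarded P x -> x \notin P /\ exists2 i, i < size P & e (nth x0 P i) x.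
Proof.
move=> hr hy hyx hx; have hy' := region_unguarded hr hy.
have xP : x \notin P.
  apply/negP => xP; move: hy'; rewrite /guarded; apply/negP/negPn/hasP.
  by exists x => //; rewrite esym hyx orbT.
split => //; move/guardedP: hx => [i hi /orP[/eqP ex|ex]]; last by exists i.
by move: xP; rewrite -ex mem_nth.
Qed.

Definition covers_boundary P r P' :=
  forall y x, y \in region P r -> e y x -> guarded P x -> guarded P' x.

Lemma region_sub P r P' r' : ~~ guarded P r -> covers_boundary P r P' ->
  r' \in region P r -> region P' r' \subset region P r.
Proof.
move=> hr bnd hr'; apply/subsetP => z; rewrite inE => hz.
apply: (connect_invariant (A := fun z => z \in region P r)) hz hr'.
move=> a b ha /and3P[hab _ hb].
apply: (region_closed hr ha hab); apply/negP => hb'.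
by move: hb; rewrite (bnd _ _ ha hab hb').
Qed.

Lemma connect_exit (A : {set T}) a b : connect e a b -> a \notin A -> b \in A ->
  exists y x, [/\ y \in A, x \notin A & e y x].
Proof.
move=> /connectP[p hp ->]; elim: p a hp => /= [a _ h1 h2|z p IH a /andP[az pz] ha hb].
  by rewrite h2 in h1.
case: (boolP (z \in A)) => hz; first by exists z, a; rewrite esym.
exact: (IH z pz hz hb).
Qed.

Definition extension_vertex P r u := (exists2 y, y \in region P r & e y u) /\
  forall j, j < size P -> e (nth x0 P j) u = (j == (size P).-1).

Lemma extension_vertex_notin P r u : 0 < size P -> ~~ guarded P r ->
  extension_vertex P r u -> u \notin P.
Proof.
move=> sP hr [[y hy hyu] hu]; apply: (proj1 (region_neighbour hr hy hyu _)).
by apply: (guarded_nth (i := (size P).-1)); rewrite ?hu ?eqxx ?orbT //; lia.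
Qed.

Lemma extension_vertex_single P r : size P = 1 -> ~~ guarded P r ->
  connect e (nth x0 P 0) r -> exists u, extension_vertex P r u.
Proof.
move=> s1 hr c0.
have n0 : nth x0 P 0 \notin region P r.
  by apply/negP => /(region_unguarded hr); rewrite (guarded_nth (i := 0)) ?s1 ?eqxx.
have rR : r \in region P r by rewrite inE connect0.
have [y [x [hy hx hyx]]] := connect_exit c0 n0 rR.
have xguarded : guarded P x.
  by apply/negPn/negP => hn; move/negP: hx; apply; exact: region_closed hr hy hyx hn.
have [_ [i hi hix]] := region_neighbour hr hy hyx xguarded.
exists x; split; first by exists y.
move=> j; rewrite s1 ltnS leqn0 => /eqP ->.
by move: hi hix; rewrite s1 ltnS leqn0 => /eqP -> ->.
Qed.

Lemma covers_boundary_retreat P r : 0 < size P -> ~~ guarded P r ->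
  ~ (exists u, extension_vertex P r u) -> covers_boundary P r (take (size P).-1 P).
Proof.
move=> sP hr hno y x hy hyx hx; apply/negPn/negP => hx'.
have far j : j < (size P).-1 -> ~~ e (nth x0 P j) x.
  move=> hj; apply: (contraNN _ hx') => hjx.
  apply: (guarded_nth (i := j)); first by rewrite size_takel ?leq_pred.
  by rewrite nth_take // hjx orbT.
have [_ [i hi hix]] := region_neighbour hr hy hyx hx.
apply: hno; exists x; split; first by exists y.
move=> j hj; case: eqP => [ej|hne]; last by apply/negbTE/far; lia.
have ei : i = (size P).-1.
  case: (ltnP i (size P).-1) => h; first by move: hix; rewrite (negbTE (far _ h)).
  lia.
by rewrite ej -ei.
Qed.

Section Strategy.
Variable k : nat.

Definition place (P : seq T) : {ffun 'I_k -> T} := [ffun i : 'I_k => nth (last x0 P) P i].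

Lemma place_nth P (i : 'I_k) : 0 < size P -> place P i = nth x0 P (minn i (size P).-1).
Proof.
move=> sP; rewrite ffunE; case: (ltnP i (size P)) => h.
- by rewrite (set_nth_default x0) //; congr nth; lia.
- by rewrite nth_default // -nth_last; congr nth; lia.
Qed.

Lemma guarded_win P r : size P <= k -> guarded P r ->
  caught (place P) r \/ cop_win e (place P) r.
Proof.
move=> sk /guardedP[i hi h].
have hik : i < k by lia.
have hpl : place P (Ordinal hik) = nth x0 P i by rewrite place_nth /=; [congr nth|]; lia.
case/orP: h => [/eqP h|h]; first by left; exists (Ordinal hik); rewrite hpl.
right; apply: (CopWin (c' := [ffun j => if j == Ordinal hik then r else place P j])).
- by move=> j; rewrite ffunE; case: eqP => [->|_]; [right; rewrite hpl | left].
- by left; exists (Ordinal hik); rewrite ffunE eqxx.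
Qed.

Lemma cop_move_rcons P u : 0 < size P -> e (nth x0 P (size P).-1) u ->
  cop_move e (place P) (place (rcons P u)).
Proof.
move=> sP hu i; rewrite !place_nth ?size_rcons // nth_rcons /=.
case: (ltnP i (size P)) => hi.
- by left; rewrite ifT; [congr nth|]; lia.
- by right; rewrite ifF ?ifT; [rewrite (_ : minn i (size P).-1 = (size P).-1)| |]; lia.
Qed.

Lemma cop_move_shift P u : induced_path e x0 P -> size P = k -> 0 < size P ->
  e (nth x0 P (size P).-1) u -> cop_move e (place P) (place (behead (rcons P u))).
Proof.
move=> [_ hP] sk sP hu i; have hi := ltn_ord i.
rewrite !place_nth ?size_behead ?size_rcons // nth_behead nth_rcons; right.
rewrite (_ : minn i (size P).-1 = i); last lia.
case: ifP => h1; first by rewrite hP ?eqxx //; lia.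
have -> : nat_of_ord i = (size P).-1 by lia.
by rewrite ifT //; lia.
Qed.

Lemma cop_move_retreat P : induced_path e x0 P -> 1 < size P ->
  cop_move e (place P) (place (take (size P).-1 P)).
Proof.
move=> [_ hP] sP i; rewrite !place_nth ?size_takel ?leq_pred //; try lia.
case: (ltnP i (size P).-1) => hi.
- by left; rewrite nth_take; [congr nth|]; lia.
- right; rewrite nth_take; last lia.
  have -> : minn i (size P).-2 = (size P).-2 by lia.
  by rewrite hP; [apply/orP; right; apply/eqP | |]; lia.
Qed.

Definition cop_state v0 P r := [/\ induced_path e x0 P, 0 < size P <= k,
  ~~ guarded P r, (forall p, p \in P -> connect e v0 p) & connect e v0 r].

Definition potential P r := #|region P r| * k.+1 + size P.

Definition cops_win_below v0 P r := forall P' r',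
  potential P' r' < potential P r -> cop_state v0 P' r' -> cop_win e (place P') r'.

Lemma potential_lt_proper P r P' r' u y : ~~ guarded P r -> covers_boundary P r P' ->
  r' \in region P r -> ~~ guarded P' r' -> u \in P' -> y \in region P r -> e y u ->
  size P' <= k -> potential P' r' < potential P r.
Proof.
move=> hr bnd hr' h' uP' hy hyu sk.
have : region P' r' \proper region P r.
  apply/properP; split; first exact: region_sub bnd hr'.
  exists y => //; apply/negP => hy'.
  have := region_unguarded h' hy'; rewrite /guarded; apply/negP/negPn/hasP.
  by exists u => //; rewrite esym hyu orbT.
by move/proper_card; rewrite /potential => hc; nia.
Qed.

Lemma potential_lt_shorter P r P' r' : ~~ guarded P r -> covers_boundary P r P' ->
  r' \in region P r -> size P' < size P -> potential P' r' < potential P r.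
Proof.
move=> hr bnd hr' hs; have := subset_leq_card (region_sub hr bnd hr').
by rewrite /potential => hc; nia.
Qed.

Lemma win_by_move v0 P r P' : cop_state v0 P r -> cop_move e (place P) (place P') ->
  induced_path e x0 P' -> 0 < size P' <= k -> (forall p, p \in P' -> connect e v0 p) ->
  covers_boundary P r P' ->
  (forall r', r' \in region P r -> ~~ guarded P' r' -> potential P' r' < potential P r) ->
  cops_win_below v0 P r -> cop_win e (place P) r.
Proof.
move=> [_ _ hr _ cr] mv iP' /andP[sP' sPk'] cP' bnd hm IH.
apply: (CopWin (c' := place P')) => //; right => r' hmv.
case: (boolP (guarded P' r')) => h'; first exact: guarded_win.
have r'R : r' \in region P r.
  case: hmv => [->|hrr']; first by rewrite inE connect0.
  have hnp : ~~ guarded P r'.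
    by apply/negP => hn; move: h'; rewrite (bnd r) // inE connect0.
  by rewrite inE; apply: connect1; rewrite /free_edge hrr' hr hnp.
right; apply: IH; first exact: hm.
split; rewrite ?sP' //.
by case: hmv => [->//|hrr']; apply: connect_trans cr (connect1 hrr').
Qed.

Lemma win_extend v0 P r u : cop_state v0 P r -> size P < k -> extension_vertex P r u ->
  cops_win_below v0 P r -> cop_win e (place P) r.
Proof.
move=> st hk ext; have [iP /andP[sP _] hr cP _] := st.
have [[y hy hyu] hu] := ext.
have hlast : e (nth x0 P (size P).-1) u by rewrite hu ?eqxx //; lia.
have uP := extension_vertex_notin sP hr ext.
have bnd : covers_boundary P r (rcons P u).
  by move=> y' x _ _; rewrite /guarded has_rcons => ->; rewrite orbT.
apply: (win_by_move st (cop_move_rcons sP hlast) (induced_path_rcons esym eirr iP uP hu)).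
- by rewrite size_rcons.
- move=> p; rewrite mem_rcons inE => /orP[/eqP->|/cP //].
  by apply: connect_trans (cP _ (mem_nth x0 _)) (connect1 hlast); rewrite ltn_predL.
- exact: bnd.
- move=> r' hr' h'; apply: (potential_lt_proper hr bnd hr' h' _ hy hyu).
  + by rewrite mem_rcons mem_head.
  + by rewrite size_rcons.
Qed.

Hypothesis no_long_cycle : forall s, induced_cycle e s -> size s < k.+2.

Lemma covers_boundary_shift P r u : induced_path e x0 P -> size P = k -> 0 < size P ->
  ~~ guarded P r -> extension_vertex P r u -> covers_boundary P r (behead (rcons P u)).
Proof.
move=> iP sk sP hr ext y' x hy' hyx hx; have [[y hy hyu] hu] := ext.
rewrite behead_rcons // /guarded has_rcons orbC.
case: (boolP ((u == x) || e u x)) => hux; first by rewrite orbT.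
rewrite orbF; apply: contraT => hnb.
have [xP [i0 hi0 hix]] := region_neighbour hr hy' hyx hx.
have far i : 0 < i < size P -> ~~ e (nth x0 P i) x.
  case: i => // i /andP[_ hi]; apply: contra hnb => hix'.
  apply/hasP; exists (nth x0 P i.+1); last by rewrite hix' orbT.
  by rewrite -nth_behead; apply: mem_nth; rewrite size_behead -ltnS (ltn_predK hi).
have hxi i : i < size P -> e (nth x0 P i) x = (i == 0).
  case: (posnP i) => [->|hpos] hi; last by apply/negbTE/far; lia.
  by case: (posnP i0) hix => [<-//|h0]; rewrite (negbTE (far i0 _)) //; lia.
have hY z : ~~ guarded P z ->
    forall i, i < size P -> (nth x0 P i != z) && ~~ e (nth x0 P i) z.
  by move=> hz i hi; rewrite -negb_or; move: hz; apply: contra; apply: guarded_nth hi.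
have ux : u != x by apply: contraNneq hux => ->; rewrite eqxx.
have walk_ux : exists q, walk e x0 (fun z => ~~ guarded P z) u x q.
  apply: (@walk_of_connect _ _ x0 (free_edge P) _ u x y y').
  - by move=> ? ? /and3P[-> _ ->].
  - by rewrite esym.
  - exact: hyx.
  - exact: region_unguarded hr hy.
  - move: hy hy'; rewrite !inE (sym_connect_sym (free_edge_sym P)) => hy hy'.
    exact: connect_trans hy hy'.
have [s [/no_long_cycle hs hsz]] := induced_cycle_close esym eirr iP sP hY xP
  (extension_vertex_notin sP hr ext) ux hxi hu walk_ux.
by move: hs; rewrite -sk ltnNge hsz.
Qed.

Lemma win_shift v0 P r u : cop_state v0 P r -> size P = k -> extension_vertex P r u ->
  cops_win_below v0 P r -> cop_win e (place P) r.
Proof.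
move=> st sk ext; have [iP /andP[sP _] hr cP _] := st.
have [[y hy hyu] hu] := ext.
have hlast : e (nth x0 P (size P).-1) u by rewrite hu ?eqxx //; lia.
have uP := extension_vertex_notin sP hr ext.
have bnd := covers_boundary_shift iP sk sP hr ext.
have sP' : size (behead (rcons P u)) = size P by rewrite size_behead size_rcons.
apply: (win_by_move st (cop_move_shift iP sk sP hlast)
         (induced_path_behead (induced_path_rcons esym eirr iP uP hu))).
- by rewrite sP' sP sk /=.
- move=> p /mem_behead; rewrite mem_rcons inE => /orP[/eqP->|/cP //].
  by apply: connect_trans (cP _ (mem_nth x0 _)) (connect1 hlast); rewrite ltn_predL.
- exact: bnd.
- move=> r' hr' h'; apply: (potential_lt_proper hr bnd hr' h' _ hy hyu).
  + by rewrite behead_rcons // mem_rcons mem_head.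
  + by rewrite sP' sk.
Qed.

Lemma win_retreat v0 P r : cop_state v0 P r -> 1 < size P ->
  ~ (exists u, extension_vertex P r u) -> cops_win_below v0 P r -> cop_win e (place P) r.
Proof.
move=> st s1 hno; have [iP /andP[sP sk] hr cP _] := st.
have sP' : size (take (size P).-1 P) = (size P).-1 by rewrite size_takel ?leq_pred.
have bnd := covers_boundary_retreat sP hr hno.
apply: (win_by_move st (cop_move_retreat iP s1) (induced_path_take _ iP)).
- by rewrite sP'; lia.
- by move=> p /mem_take /cP.
- exact: bnd.
- by move=> r' hr' _; apply: potential_lt_shorter hr bnd hr' _; lia.
Qed.

Lemma cop_state_win v0 P r : cop_state v0 P r -> cop_win e (place P) r.
Proof.
move: {2}(potential P r).+1 (ltnSn (potential P r)) => n.
elim: n P r => // n IH P r hlt st.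
have below : cops_win_below v0 P r by move=> P' r' h; apply: IH; lia.
have [_ /andP[sP sk] hr cP cr] := st.
case: (classic (exists u, extension_vertex P r u)) => [[u ext]|hno].
- case: (ltnP (size P) k) => hk; first exact: win_extend st hk ext below.
  by apply: win_shift st _ ext below; lia.
- have s1 : 1 < size P.
    rewrite ltnNge; apply/negP => h1; apply: hno; apply: extension_vertex_single hr _.
    + lia.
    + have := cP _ (mem_nth x0 sP); rewrite (sym_connect_sym esym) => c0.
      exact: connect_trans c0 cr.
  exact: win_retreat st s1 hno below.
Qed.

End Strategy.
End CopStrategy.

Lemma cop_number_le_of_win (T : finType) (e : rel T) (S : {set T}) m :
  1 <= m -> cops_win_on e m S -> exists2 n, n <= m & is_cop_number_on e S n.
Proof.
move=> hm hw.
have [n [[hn hwn] nmin]] : exists n, (1 <= n /\ cops_win_on e n S) /\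
    forall j, 1 <= j /\ cops_win_on e j S -> n <= j.
  by apply: (ex_minimal_measure (fun n => n)); exists m.
exists n; first exact: nmin.
by split=> // j /andP[hj1 hjn] hwj; have := nmin j (conj hj1 hwj); lia.
Qed.

Theorem proposition3 (l : nat) (T : finType) (e : rel T) :
  3 <= l -> symmetric e -> irreflexive e ->
  (forall s : seq T, induced_cycle e s -> size s < l) ->
  cop_number_le e (l - 2).
Proof.
move=> hl esym eirr hcyc v; set k := l - 2.
have hk : 0 < k by rewrite /k; lia.
have no_long_cycle s : induced_cycle e s -> size s < k.+2.
  by move/hcyc; rewrite /k; lia.
apply: cop_number_le_of_win => //.
have start i : place v k [:: v] i = v by rewrite ffunE; case: (nat_of_ord i) => [|[]].
exists (place v k [:: v]); split=> [i|r]; first by rewrite start inE connect0.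
rewrite inE => hr; case: (boolP (guarded e [:: v] r)) => h; first by apply: guarded_win h.
right; apply: (cop_state_win esym eirr no_long_cycle (v0 := v)); split=> //.
- by split=> // i j; rewrite /= !ltnS !leqn0 => /eqP-> /eqP->; rewrite /= eirr.
- by move=> p; rewrite inE => /eqP->; rewrite connect0.
Qed.
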